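(* Assume $0\le P_F(j)<P_D(j)\le1$. Then $\frac{\partial^2}{\partial P_j^2}J(P_1,\dots,P_K)\le0$ for all $P_j\ge0$ (and all $P_i\ge 0$, $i\ne j$) if and only if $$\frac34-\frac12P_F(j)-\frac14\sqrt{1+12P_F(j)-12P_F(j)^2}\ \le\ P_D(j)\ \le\ \frac34-\frac12P_F(j)+\frac14\sqrt{1+12P_F(j)-12P_F(j)^2}.$$
   Context: Fix $K\ge1$, $\sigma^2>0$, and for $j=1,\dots,K$ channel gains $g_j>0$ and local probabilities $P_D(j),P_F(j)\in[0,1]$. Define $\alpha_F(j)=P_F(j)(1-P_D(j))+P_D(j)(P_D(j)-P_F(j))$, $\alpha_D(j)=P_D(j)(1-P_F(j))-P_F(j)(P_D(j)-P_F(j))$, $\beta_F(j)=P_D(j)(1-P_D(j))$, $\beta_D(j)=P_F(j)(1-P_F(j))$, and for $P_1,\dots,P_K\ge0$ $$J(P_1,\dots,P_K)=\sum_{j=1}^K\left[\frac{\sigma^2+\alpha_F(j)g_jP_j}{\sigma^2+\beta_F(j)g_jP_j}+\frac{\sigma^2+\alpha_D(j)g_jP_j}{\sigma^2+\beta_D(j)g_jP_j}\right].$$ *)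

From Stdlib Require Import Reals List.
From Coquelicot Require Import Coquelicot.
Open Scope R_scope.

Definition alphaF (PD PF : R) : R := PF * (1 - PD) + PD * (PD - PF).
Definition alphaD (PD PF : R) : R := PD * (1 - PF) - PF * (PD - PF).
Definition betaF (PD PF : R) : R := PD * (1 - PD).
Definition betaD (PD PF : R) : R := PF * (1 - PF).

Definition Jterm (sigma2 g PD PF p : R) : R :=
  (sigma2 + alphaF PD PF * g * p) / (sigma2 + betaF PD PF * g * p)
  + (sigma2 + alphaD PD PF * g * p) / (sigma2 + betaD PD PF * g * p).

(* J(P_1,...,P_K), channels indexed 0..K-1. *)
Definition J (K : nat) (sigma2 : R) (g PD PF P : nat -> R) : R :=
  fold_right Rplus 0
    (map (fun j => Jterm sigma2 (g j) (PD j) (PF j) (P j)) (seq 0 K)).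

Definition upd (P : nat -> R) (j : nat) (x : R) : nat -> R :=
  fun i => if Nat.eqb i j then x else P i.

(** The j-th summand of J is a sum of two Möbius functions of P_j, so its
    second derivative is explicit. Writing D = P_D(j), F = P_F(j),
    v t = t(1-t) and m t = t(1-t)(1-2t) (variance and third central moment of
    a Bernoulli(t) variable), one gets
      d²J/dP_j² = 2 σ² g_j² (D - F) (m D / (σ² + v D g_j P_j)³ - m F / (σ² + v F g_j P_j)³).
    At P_j = 0 the sign is that of m D - m F = (D - F) q(D, F) with q a
    quadratic whose roots in D are the two bounds of the window; conversely, if
    m D <= m F, the comparison of v D and v F (governed by the sign of 1 - D - F)
    shows that the denominators can only reinforce the inequality. *)
From Stdlib Require Import Reals List Lra Psatz.
From Coquelicot Require Import Coquelicot.
Open Scope R_scope.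

Lemma locally_affine_pos (s b x0 : R) :
  0 < s + b * x0 -> locally x0 (fun y => 0 < s + b * y).
Proof.
  intros Hpos.
  assert (Hcont : continuity_pt (fun y => s + b * y) x0) by reg.
  apply continuity_pt_locally with (eps := mkposreal _ Hpos) in Hcont.
  revert Hcont; apply filter_imp; simpl; intros y Hy.
  apply Rabs_def2 in Hy; lra.
Qed.

Lemma Derive_n2_sum_frac_affine (e c a s b c' a' s' b' x0 : R) :
  0 < s + b * x0 -> 0 < s' + b' * x0 ->
  Derive_n (fun x => e + ((c + a * x) / (s + b * x) + (c' + a' * x) / (s' + b' * x))) 2 x0
  = - 2 * b * (a * s - b * c) / (s + b * x0) ^ 3
    + - 2 * b' * (a' * s' - b' * c') / (s' + b' * x0) ^ 3.
Proof.
  intros H H'. simpl.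
  rewrite (Derive_ext_loc _
    (fun x => (a * s - b * c) / (s + b * x) ^ 2 + (a' * s' - b' * c') / (s' + b' * x) ^ 2)).
  - apply is_derive_unique. auto_derive; [repeat split; intro; nra | field; lra].
  - generalize (filter_and _ _ (locally_affine_pos _ _ _ H) (locally_affine_pos _ _ _ H')).
    apply filter_imp.
    intros y [Hy Hy']. apply is_derive_unique. auto_derive; [repeat split; intro; nra | field; lra].
Qed.

Lemma map_upd_notin (F : nat -> R -> R) (P : nat -> R) (j : nat) (x : R) (l : list nat) :
  ~ In j l -> map (fun i => F i (upd P j x i)) l = map (fun i => F i (P i)) l.
Proof.
  intros Hj. apply map_ext_in. intros i Hi. unfold upd.
  destruct (Nat.eqb_spec i j) as [-> | _]; [contradiction | reflexivity].
Qed.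

Lemma sum_map_upd (F : nat -> R -> R) (P : nat -> R) (j : nat) (x y : R) (l : list nat) :
  NoDup l -> In j l ->
  fold_right Rplus 0 (map (fun i => F i (upd P j x i)) l) - F j x
  = fold_right Rplus 0 (map (fun i => F i (upd P j y i)) l) - F j y.
Proof.
  induction l as [| a l IH]; simpl; [tauto |].
  intros Hnd Hin. apply NoDup_cons_iff in Hnd as [Ha Hnd].
  destruct (Nat.eq_dec a j) as [-> | Haj].
  - rewrite !map_upd_notin by exact Ha. unfold upd. rewrite Nat.eqb_refl. ring.
  - destruct Hin as [-> | Hin]; [contradiction |].
    unfold upd at 1 3. destruct (Nat.eqb_spec a j); [contradiction |].
    pose proof (IH Hnd Hin). lra.
Qed.

Lemma J_upd (K : nat) (sigma2 : R) (g PD PF P : nat -> R) (j : nat) (x : R) :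
  (j < K)%nat ->
  J K sigma2 g PD PF (upd P j x)
  = J K sigma2 g PD PF (upd P j 0) - Jterm sigma2 (g j) (PD j) (PF j) 0
    + Jterm sigma2 (g j) (PD j) (PF j) x.
Proof.
  intros Hj. unfold J.
  pose proof (sum_map_upd (fun i => Jterm sigma2 (g i) (PD i) (PF i)) P j x 0
                (seq 0 K) (seq_NoDup K 0) (proj2 (in_seq K 0 j) (conj (le_0_n j) Hj))).
  simpl in *. lra.
Qed.

Definition bern_var (t : R) : R := t * (1 - t).
Definition bern_mu3 (t : R) : R := t * (1 - t) * (1 - 2 * t).

Lemma bern_var_ge0 (t : R) : 0 <= t <= 1 -> 0 <= bern_var t.
Proof. intros Ht. unfold bern_var. nra. Qed.

Lemma Derive_n2_Jterm (e s G D F x : R) :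
  0 < s + bern_var D * G * x -> 0 < s + bern_var F * G * x ->
  Derive_n (fun p => e + Jterm s G D F p) 2 x
  = 2 * s * G ^ 2 * (D - F)
    * (bern_mu3 D / (s + bern_var D * G * x) ^ 3 - bern_mu3 F / (s + bern_var F * G * x) ^ 3).
Proof.
  intros HD HF. unfold Jterm.
  rewrite (Derive_n2_sum_frac_affine e s (alphaF D F * G) s (betaF D F * G)
             s (alphaD D F * G) s (betaD D F * G) x HD HF).
  unfold alphaF, alphaD, betaF, betaD, bern_var, bern_mu3 in *. field. lra.
Qed.

Lemma Rdiv_cube_le (A B d1 d2 : R) :
  0 < d1 -> 0 < d2 -> A <= B ->
  (0 <= A /\ d2 <= d1) \/ (A <= 0 <= B) \/ (B <= 0 /\ d1 <= d2) ->
  A / d1 ^ 3 <= B / d2 ^ 3.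
Proof.
  intros H1 H2 HAB Hcases. unfold Rdiv.
  assert (Hi1 : 0 < / d1 ^ 3) by (apply Rinv_0_lt_compat, pow_lt; lra).
  assert (Hi2 : 0 < / d2 ^ 3) by (apply Rinv_0_lt_compat, pow_lt; lra).
  destruct Hcases as [[HA Hd] | [HA | [HB Hd]]].
  - assert (/ d1 ^ 3 <= / d2 ^ 3) by (apply Rinv_le_contravar, pow_incr; [apply pow_lt | ]; lra).
    nra.
  - nra.
  - assert (/ d2 ^ 3 <= / d1 ^ 3) by (apply Rinv_le_contravar, pow_incr; [apply pow_lt | ]; lra).
    nra.
Qed.

Lemma bern_mu3_div_le (s G D F x : R) :
  0 < s -> 0 <= G -> 0 <= x -> 0 <= F -> F < D -> D <= 1 ->
  bern_mu3 D <= bern_mu3 F ->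
  bern_mu3 D / (s + bern_var D * G * x) ^ 3 <= bern_mu3 F / (s + bern_var F * G * x) ^ 3.
Proof.
  intros Hs HG Hx HF HFD HD Hmu.
  assert (HGx : 0 <= G * x) by nra.
  assert (Hv : bern_var D - bern_var F = (D - F) * (1 - D - F)) by (unfold bern_var; ring).
  pose proof (bern_var_ge0 D ltac:(lra)). pose proof (bern_var_ge0 F ltac:(lra)).
  apply Rdiv_cube_le; [nra | nra | exact Hmu |].
  assert (Hmul : forall a b c, 0 <= a -> 0 <= b -> 0 <= c -> 0 <= a * b * c)
    by (intros; repeat apply Rmult_le_pos; assumption).
  unfold bern_mu3 in *.
  destruct (Rle_lt_dec D (1 / 2)); [| destruct (Rle_lt_dec F (1 / 2))].
  - left. split; [apply Hmul; lra |].
    assert (0 <= (D - F) * (1 - D - F) * (G * x)) by (apply Hmul; lra). nra.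
  - right; left. split.
    + assert (0 <= D * (1 - D) * (2 * D - 1)) by (apply Hmul; lra). lra.
    + assert (0 <= F * (1 - F) * (1 - 2 * F)) by (apply Hmul; lra). lra.
  - right; right. split.
    + assert (0 <= F * (1 - F) * (2 * F - 1)) by (apply Hmul; lra). lra.
    + assert (0 <= (D - F) * (D + F - 1) * (G * x)) by (apply Hmul; lra). nra.
Qed.

(** The window consists of the D between the two roots (3 - 2F ± √(1 + 12F - 12F²))/4
    of the quadratic factor of [bern_mu3 D - bern_mu3 F]. *)
Lemma window_iff_bern_mu3_le (D F : R) :
  0 <= F <= 1 -> F < D ->
  (3/4 - 1/2 * F - 1/4 * sqrt (1 + 12 * F - 12 * F ^ 2) <= D /\
   D <= 3/4 - 1/2 * F + 1/4 * sqrt (1 + 12 * F - 12 * F ^ 2))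
  <-> bern_mu3 D <= bern_mu3 F.
Proof.
  intros HF HFD.
  assert (Hdisc : 0 <= 1 + 12 * F - 12 * F ^ 2) by nra.
  pose proof (sqrt_sqrt _ Hdisc) as Hr. pose proof (sqrt_pos (1 + 12 * F - 12 * F ^ 2)) as Hr0.
  set (r := sqrt (1 + 12 * F - 12 * F ^ 2)) in *.
  assert (Hfac : 8 * (bern_mu3 D - bern_mu3 F) = (D - F) * ((4 * D - 3 + 2 * F) ^ 2 - r * r))
    by (rewrite Hr; unfold bern_mu3; ring).
  assert (Hsq : (4 * D - 3 + 2 * F) ^ 2 - r * r = (4 * D - 3 + 2 * F - r) * (4 * D - 3 + 2 * F + r))
    by ring.
  split.
  - intros [H1 H2].
    assert (0 <= (r - (4 * D - 3 + 2 * F)) * (4 * D - 3 + 2 * F + r))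
      by (apply Rmult_le_pos; lra).
    nra.
  - intros Hmu.
    assert (Hle : (4 * D - 3 + 2 * F - r) * (4 * D - 3 + 2 * F + r) <= 0) by nra.
    split; nra.
Qed.

Theorem lemma3 (K : nat) (sigma2 : R) (g PD PF : nat -> R) (j : nat) :
  (1 <= K)%nat -> 0 < sigma2 ->
  (forall i, (i < K)%nat -> 0 < g i) ->
  (forall i, (i < K)%nat -> 0 <= PD i <= 1 /\ 0 <= PF i <= 1) ->
  (j < K)%nat ->
  0 <= PF j -> PF j < PD j -> PD j <= 1 ->
  ((forall P : nat -> R, (forall i, (i < K)%nat -> 0 <= P i) ->
      Derive_n (fun x => J K sigma2 g PD PF (upd P j x)) 2 (P j) <= 0)
   <->
   (3/4 - 1/2 * PF j - 1/4 * sqrt (1 + 12 * PF j - 12 * PF j ^ 2) <= PD j /\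
    PD j <= 3/4 - 1/2 * PF j + 1/4 * sqrt (1 + 12 * PF j - 12 * PF j ^ 2))).
Proof.
  intros _ Hs Hg Hprob Hj HF HFD HD.
  destruct (Hprob j Hj) as [_ HF1].
  set (D := PD j) in *. set (F := PF j) in *. set (G := g j).
  assert (HG : 0 < G) by exact (Hg j Hj).
  assert (Hden : forall t x, 0 <= t <= 1 -> 0 <= x -> 0 < sigma2 + bern_var t * G * x).
  { intros t x Ht Hx. pose proof (bern_var_ge0 t Ht).
    assert (0 <= bern_var t * G * x) by (repeat apply Rmult_le_pos; lra). lra. }
  assert (Hder : forall P : nat -> R, 0 <= P j ->
    Derive_n (fun x => J K sigma2 g PD PF (upd P j x)) 2 (P j)
    = 2 * sigma2 * G ^ 2 * (D - F)
      * (bern_mu3 D / (sigma2 + bern_var D * G * P j) ^ 3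
         - bern_mu3 F / (sigma2 + bern_var F * G * P j) ^ 3)).
  { intros P HP.
    rewrite (Derive_n_ext _ _ 2 (P j) (fun x => J_upd K sigma2 g PD PF P j x Hj)).
    apply Derive_n2_Jterm; apply Hden; lra. }
  rewrite window_iff_bern_mu3_le by lra.
  assert (HGD : 0 < 2 * sigma2 * G ^ 2 * (D - F)).
  { pose proof (pow_lt G 2 HG). apply Rmult_lt_0_compat; nra. }
  split.
  - intros Hneg. specialize (Hneg (fun _ => 0) (fun _ _ => Rle_refl 0)).
    rewrite Hder in Hneg by apply Rle_refl.
    rewrite !Rmult_0_r, !Rplus_0_r in Hneg.
    assert (Hs3 : 0 < / sigma2 ^ 3) by (apply Rinv_0_lt_compat, pow_lt; lra).
    assert (Hprod : 0 < 2 * sigma2 * G ^ 2 * (D - F) * / sigma2 ^ 3)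
      by (apply Rmult_lt_0_compat; assumption).
    replace (2 * sigma2 * G ^ 2 * (D - F) * (bern_mu3 D / sigma2 ^ 3 - bern_mu3 F / sigma2 ^ 3))
      with ((bern_mu3 D - bern_mu3 F) * (2 * sigma2 * G ^ 2 * (D - F) * / sigma2 ^ 3))
      in Hneg by (field; lra).
    nra.
  - intros Hmu P HP. rewrite Hder by (apply HP; exact Hj).
    pose proof (bern_mu3_div_le sigma2 G D F (P j) Hs (Rlt_le _ _ HG) (HP j Hj) HF HFD HD Hmu).
    apply Rmult_le_0_l; lra.
Qed.
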